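(* For $a,b>1$ define $$x=\frac{\sqrt{a^2-1}\,(a^3-8)}{a^6},\quad x_1=(\sqrt{a^2-1}-\sqrt{b^2-1})^3+a^3,\quad y=\frac{\sqrt{b^2-1}\,(b^3-8)}{b^6},\quad y_1=(\sqrt{a^2-1}-\sqrt{b^2-1})^3+b^3.$$ Let $b_1$ be the only real root in $(\sqrt2,\sqrt2(\sqrt3+1))$ of $p(z)=-2z^5+3z^3+40z^2-48$. Then for all $a\in(1,2)$ and $b\in(\sqrt2,b_1)$, $$x<0,\qquad y_1>0,\qquad \frac{\partial x_1}{\partial b}\le 0,\qquad \frac{\partial (y\,y_1)}{\partial b}>0.$$ *)

From Stdlib Require Import Reals.
From Coquelicot Require Import Coquelicot.
Open Scope R_scope.

Definition xf (a : R) : R := sqrt (a ^ 2 - 1) * (a ^ 3 - 8) / a ^ 6.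
Definition x1f (a b : R) : R := (sqrt (a ^ 2 - 1) - sqrt (b ^ 2 - 1)) ^ 3 + a ^ 3.
Definition yf (b : R) : R := sqrt (b ^ 2 - 1) * (b ^ 3 - 8) / b ^ 6.
Definition y1f (a b : R) : R := (sqrt (a ^ 2 - 1) - sqrt (b ^ 2 - 1)) ^ 3 + b ^ 3.
Definition pz (z : R) : R := -2 * z ^ 5 + 3 * z ^ 3 + 40 * z ^ 2 - 48.

From Stdlib Require Import Reals Lra Psatz.
From Coquelicot Require Import Coquelicot.
Open Scope R_scope.

(* With u = sqrt(a^2-1), v = sqrt(b^2-1) and w = u - v one has -v < w < v < b.
   The first three claims are then sign checks: a^3 < 8, w^3 > -b^3, and
   dx1/db = -3 b w^2 / v.  For the last one, y' = p(b) / (v b^7), so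
   (y y1)' = N / (v b^7) with N = p(b) (w^3 + b^3) + 3 v b^2 (b^3 - 8) (v b - w^2).
   As p(sqrt 2) > 0 and p has no root in (sqrt 2, b1), p > 0 there, so N > 0 is clear when b >= 2.  When b < 2,
   bounding w^3 >= -v w^2 makes N at least affine in w^2 on [0, v^2], and both
   endpoint values are positive because p(b) - 3 v^2 (8 - b^3) = b^5 + 16 b^2 - 24. *)

Lemma continuous_pos_without_root (f : R -> R) c b :
  continuity f -> c <= b -> 0 < f c ->
  (forall z, c < z <= b -> f z <> 0) -> 0 < f b.
Proof.
intros Hf Hcb Hc Hroot.
destruct (Rle_or_lt (f b) 0) as [Hb|Hb]; [exfalso|exact Hb].
destruct (IVT_gen f c b 0 Hf) as [z [Hz Hfz]].
- rewrite Rmin_right, Rmax_left; lra.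
- rewrite Rmin_left, Rmax_right in Hz by lra.
  assert (z <> c) by (intros ->; lra).
  exact (Hroot z ltac:(lra) Hfz).
Qed.

Lemma sqrt2_sqr : sqrt 2 * sqrt 2 = 2.
Proof. apply sqrt_sqrt; lra. Qed.

Lemma pz_sqrt2_pos : 0 < pz (sqrt 2).
Proof.
assert (H2 := sqrt2_sqr).
assert (Hs : sqrt 2 < 2) by (pose proof Rlt_sqrt2_0; nra).
unfold pz.
replace (sqrt 2 ^ 5) with ((sqrt 2 * sqrt 2) ^ 2 * sqrt 2) by ring.
replace (sqrt 2 ^ 3) with (sqrt 2 * sqrt 2 * sqrt 2) by ring.
replace (sqrt 2 ^ 2) with (sqrt 2 * sqrt 2) by ring.
rewrite H2; lra.
Qed.

Lemma pz_pos_below_root (b1 b : R) :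
  (forall z, sqrt 2 < z < sqrt 2 * (sqrt 3 + 1) -> pz z = 0 -> z = b1) ->
  b1 < sqrt 2 * (sqrt 3 + 1) -> sqrt 2 < b < b1 -> 0 < pz b.
Proof.
intros Hroot Hb1 Hb.
apply (continuous_pos_without_root pz (sqrt 2)); [unfold pz; reg | lra | apply pz_sqrt2_pos |].
intros z Hz Hpz.
assert (z = b1) by (apply Hroot; [lra | exact Hpz]).
lra.
Qed.

Lemma sqrt_sqr_sub1_lt (b : R) : 0 < b -> sqrt (b ^ 2 - 1) < b.
Proof.
intros Hb.
destruct (Rle_or_lt (b ^ 2 - 1) 0) as [Hneg|Hpos].
- rewrite sqrt_neg_0; lra.
- rewrite <- (sqrt_pow2 b) at 2 by lra.
  apply sqrt_lt_1_alt; lra.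
Qed.

Lemma cube_add_pos (w b : R) : - b < w -> 0 < w ^ 3 + b ^ 3.
Proof.
intros Hwb.
replace (w ^ 3 + b ^ 3) with ((w + b) * ((w - b / 2) ^ 2 + 3 / 4 * b ^ 2)) by field.
apply Rmult_lt_0_compat; [lra|].
destruct (Req_dec b 0) as [->|Hb0]; [nra|].
assert (0 < b ^ 2) by (apply pow2_gt_0; exact Hb0).
nra.
Qed.

Lemma xf_neg (a : R) : 1 < a < 2 -> xf a < 0.
Proof.
intros Ha.
assert (Hu : 0 < sqrt (a ^ 2 - 1)) by (apply sqrt_lt_R0; nra).
assert (Ha3 : a ^ 3 < 8) by nra.
assert (Ha6 : 0 < a ^ 6) by (apply pow_lt; lra).
unfold xf, Rdiv.
apply Rmult_neg_pos; [nra | now apply Rinv_0_lt_compat].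
Qed.

Lemma y1f_pos (a b : R) : 0 < b -> 0 < y1f a b.
Proof.
intros Hb.
apply cube_add_pos.
pose proof (sqrt_pos (a ^ 2 - 1)).
pose proof (sqrt_sqr_sub1_lt b Hb).
lra.
Qed.

Lemma sqrt_sub_sqrt_bounds (a b : R) : 1 < a < 2 -> 2 < b ^ 2 ->
  - sqrt (b ^ 2 - 1) < sqrt (a ^ 2 - 1) - sqrt (b ^ 2 - 1) < sqrt (b ^ 2 - 1).
Proof.
intros Ha Hb.
assert (Hu : 0 < sqrt (a ^ 2 - 1)) by (apply sqrt_lt_R0; nra).
assert (Huu : sqrt (a ^ 2 - 1) ^ 2 = a ^ 2 - 1) by (apply pow2_sqrt; nra).
assert (Hvv : sqrt (b ^ 2 - 1) ^ 2 = b ^ 2 - 1) by (apply pow2_sqrt; nra).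
pose proof (sqrt_pos (b ^ 2 - 1)).
split; nra.
Qed.

Lemma is_derive_x1f (a b : R) : 1 < b ->
  is_derive (x1f a) b
    (- 3 * b * (sqrt (a ^ 2 - 1) - sqrt (b ^ 2 - 1)) ^ 2 / sqrt (b ^ 2 - 1)).
Proof.
intros Hb.
assert (0 < sqrt (b ^ 2 - 1)) by (apply sqrt_lt_R0; nra).
unfold x1f; auto_derive; [nra|].
replace (b * (b * 1) + - (1)) with (b ^ 2 - 1) by ring.
replace (a * (a * 1) - 1) with (a ^ 2 - 1) by ring.
field; lra.
Qed.

Lemma is_derive_y1f (a b : R) : 1 < b ->
  is_derive (y1f a) b
    (3 * b ^ 2 - 3 * b * (sqrt (a ^ 2 - 1) - sqrt (b ^ 2 - 1)) ^ 2 / sqrt (b ^ 2 - 1)).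
Proof.
intros Hb.
assert (0 < sqrt (b ^ 2 - 1)) by (apply sqrt_lt_R0; nra).
unfold y1f; auto_derive; [nra|].
replace (b * (b * 1) + - (1)) with (b ^ 2 - 1) by ring.
replace (a * (a * 1) - 1) with (a ^ 2 - 1) by ring.
field; lra.
Qed.

Lemma is_derive_yf (b : R) : 1 < b ->
  is_derive yf b (pz b / (sqrt (b ^ 2 - 1) * b ^ 7)).
Proof.
intros Hb.
assert (Hv : 0 < sqrt (b ^ 2 - 1)) by (apply sqrt_lt_R0; nra).
assert (Hvv : sqrt (b ^ 2 - 1) ^ 2 = b ^ 2 - 1) by (apply pow2_sqrt; nra).
unfold yf, pz; auto_derive.
- assert (0 < b ^ 6) by (apply pow_lt; lra).
  simpl in *; repeat split; [nra | lra].
- replace (b * (b * 1) + - (1)) with (b ^ 2 - 1) by ring.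
  replace (-2 * b ^ 5 + 3 * b ^ 3 + 40 * b ^ 2 - 48)
    with (b ^ 2 * (b ^ 3 - 8) + sqrt (b ^ 2 - 1) ^ 2 * (48 - 3 * b ^ 3))
    by (rewrite Hvv; ring).
  field; lra.
Qed.

Lemma affine_pos_on_segment (alpha beta s V : R) :
  0 < alpha -> 0 < alpha + beta * V -> 0 <= s <= V -> 0 < alpha + beta * s.
Proof.
intros H0 HV Hs.
destruct (Rle_or_lt 0 beta); nra.
Qed.

Definition yy1_numerator (b v w : R) : R :=
  pz b * (w ^ 3 + b ^ 3) + 3 * v * b ^ 2 * (b ^ 3 - 8) * (v * b - w ^ 2).

Section Numerator.

Variables b v w : R.
Hypotheses (Hb0 : 0 < b) (Hb : 2 < b ^ 2).
Hypotheses (Hv : 0 < v) (Hvb : v ^ 2 = b ^ 2 - 1) (Hw : - v < w < v).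

Lemma yy1_numerator_pos_ge2 : 2 <= b -> 0 < pz b -> 0 < yy1_numerator b v w.
Proof.
intros H2 Hp.
assert (v < b) by nra.
assert (0 < w ^ 3 + b ^ 3) by (apply cube_add_pos; lra).
assert (8 <= b ^ 3) by nra.
assert (w ^ 2 < v * b) by nra.
unfold yy1_numerator.
assert (0 <= 3 * v * b ^ 2 * (b ^ 3 - 8) * (v * b - w ^ 2)).
{ apply Rmult_le_pos; [|lra]. apply Rmult_le_pos; [|lra]. nra. }
nra.
Qed.

Lemma yy1_numerator_pos_lt2 : b < 2 -> 0 < yy1_numerator b v w.
Proof.
intros H2.
assert (v < b) by nra.
set (d := 8 - b ^ 3).
assert (Hd : 0 < d) by (unfold d; nra).
assert (Hpd : pz b - 3 * v ^ 2 * d = b ^ 5 + 16 * b ^ 2 - 24)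
  by (unfold d, pz; rewrite Hvb; ring).
assert (Hgap : 0 < pz b - 3 * v ^ 2 * d).
{ rewrite Hpd. assert (0 < b ^ 5) by (apply pow_lt; lra). lra. }
assert (Hw3 : pz b * (b ^ 3 - v * w ^ 2) <= pz b * (w ^ 3 + b ^ 3)).
{ apply Rmult_le_compat_l; [nra|].
  assert (0 <= (w + v) * w ^ 2) by (apply Rmult_le_pos; [lra | apply pow2_ge_0]).
  nra. }
apply Rlt_le_trans with (b ^ 3 * (pz b - 3 * v ^ 2 * d) + v * (3 * d * b ^ 2 - pz b) * w ^ 2).
- apply affine_pos_on_segment with (V := v ^ 2).
  + apply Rmult_lt_0_compat; [apply pow_lt|]; lra.
  + replace (b ^ 3 * (pz b - 3 * v ^ 2 * d) + v * (3 * d * b ^ 2 - pz b) * v ^ 2)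
      with ((b - v) * (pz b * (b ^ 2 + b * v + v ^ 2) - 3 * d * v ^ 2 * b ^ 2)) by ring.
    apply Rmult_lt_0_compat; [lra|].
    assert (0 < pz b) by nra.
    assert (3 * v ^ 2 * d * b ^ 2 < pz b * b ^ 2) by (apply Rmult_lt_compat_r; nra).
    assert (0 <= pz b * (b * v + v ^ 2)) by (apply Rmult_le_pos; nra).
    lra.
  + split; [apply pow2_ge_0 | nra].
- unfold yy1_numerator; fold d.
  replace (b ^ 3 - 8) with (- d) by (unfold d; ring).
  nra.
Qed.

Lemma yy1_numerator_pos : 0 < pz b -> 0 < yy1_numerator b v w.
Proof.
intros Hp.
destruct (Rle_or_lt 2 b).
- now apply yy1_numerator_pos_ge2.
- now apply yy1_numerator_pos_lt2.
Qed.

End Numerator.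

Lemma is_derive_yf_y1f (a b : R) : 1 < b ->
  is_derive (fun t => yf t * y1f a t) b
    (yy1_numerator b (sqrt (b ^ 2 - 1)) (sqrt (a ^ 2 - 1) - sqrt (b ^ 2 - 1))
       / (sqrt (b ^ 2 - 1) * b ^ 7)).
Proof.
intros Hb.
set (v := sqrt (b ^ 2 - 1)); set (w := sqrt (a ^ 2 - 1) - v).
assert (0 < v) by (apply sqrt_lt_R0; nra).
replace (yy1_numerator b v w / (v * b ^ 7))
  with (pz b / (v * b ^ 7) * y1f a b + yf b * (3 * b ^ 2 - 3 * b * w ^ 2 / v)).
- exact (is_derive_mult _ _ _ _ _ (is_derive_yf b Hb) (is_derive_y1f a b Hb) Rmult_comm).
- unfold yy1_numerator, yf, y1f; fold v w.
  field; split; lra.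
Qed.

Lemma Derive_x1f_nonpos (a b : R) : 1 < b -> Derive (x1f a) b <= 0.
Proof.
intros Hb.
rewrite (is_derive_unique _ _ _ (is_derive_x1f a b Hb)).
assert (0 < sqrt (b ^ 2 - 1)) by (apply sqrt_lt_R0; nra).
assert (0 <= b * (sqrt (a ^ 2 - 1) - sqrt (b ^ 2 - 1)) ^ 2 / sqrt (b ^ 2 - 1)).
{ apply Rmult_le_pos; [apply Rmult_le_pos; [lra | apply pow2_ge_0] |].
  now apply Rlt_le, Rinv_0_lt_compat. }
lra.
Qed.

Lemma Derive_yf_y1f_pos (a b : R) : 1 < a < 2 -> sqrt 2 < b -> 0 < pz b ->
  0 < Derive (fun t => yf t * y1f a t) b.
Proof.
intros Ha Hb Hp.
pose proof sqrt2_sqr; pose proof Rlt_sqrt2_0.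
assert (Hb2 : 2 < b ^ 2) by nra.
assert (Hb1 : 1 < b) by nra.
assert (Hv : 0 < sqrt (b ^ 2 - 1)) by (apply sqrt_lt_R0; nra).
erewrite is_derive_unique by exact (is_derive_yf_y1f a b Hb1).
apply Rdiv_lt_0_compat; [|apply Rmult_lt_0_compat; [lra | apply pow_lt; lra]].
apply yy1_numerator_pos; try lra.
- apply pow2_sqrt; lra.
- now apply sqrt_sub_sqrt_bounds.
Qed.

Theorem lemma3 :
  forall b1 : R,
    sqrt 2 < b1 < sqrt 2 * (sqrt 3 + 1) ->
    pz b1 = 0 ->
    (forall z : R, sqrt 2 < z < sqrt 2 * (sqrt 3 + 1) -> pz z = 0 -> z = b1) ->
    forall a b : R, 1 < a < 2 -> sqrt 2 < b < b1 ->
      xf a < 0 /\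
      y1f a b > 0 /\
      ex_derive (fun t => x1f a t) b /\ Derive (fun t => x1f a t) b <= 0 /\
      ex_derive (fun t => yf t * y1f a t) b /\ Derive (fun t => yf t * y1f a t) b > 0.
Proof.
intros b1 Hb1 _ Hroot a b Ha Hb.
assert (Hb0 : 1 < b) by (pose proof sqrt2_sqr; pose proof Rlt_sqrt2_0; nra).
assert (Hp : 0 < pz b) by (apply (pz_pos_below_root b1); tauto).
split; [now apply xf_neg|].
split; [apply y1f_pos; lra|].
split; [eexists; exact (is_derive_x1f a b Hb0)|].
split; [exact (Derive_x1f_nonpos a b Hb0)|].
split; [eexists; exact (is_derive_yf_y1f a b Hb0)|].
now apply Derive_yf_y1f_pos.
Qed.
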